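(* Let $G$, $H$ be graphs with $n=|V(G)|$, $n'=|V(H)|$, $m=|E(G)|$, $m'=|E(H)|$, and let $k_V$, $k_E$ be vertex and edge kernels whose single evaluation takes time $\mathsf{T}_V$ and $\mathsf{T}_E$, respectively. Consider the following algorithm: for all $v\in V(G)$, $v'\in V(H)$, compute $w\gets k_V(v,v')$ and, if $w>0$, create a vertex $(v,v')$ of weight $w$; then, fixing an arbitrary total order $\prec$ on the created vertices, for every created vertex $(u,s)$ and all $v\in N(u)$, $t\in N(s)$ such that $(v,t)$ is a created vertex and $(u,s)\prec(v,t)$, compute $w\gets k_E(uv,st)$ and, if $w>0$, create the edge $(u,s)(v,t)$ of weight $w$. This algorithm computes the weighted direct product graph $G\times_w H$ in time $O(nn'\mathsf{T}_V+mm'\mathsf{T}_E)$.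
   Context: Graphs are finite and undirected; $N(v)$ denotes the neighborhood of $v$. The weighted direct product graph $G\times_w H=(\mathcal V,\mathcal E,w)$ is defined by $\mathcal V=\{(v,v')\in V(G)\times V(H): k_V(v,v')>0\}$, $\mathcal E=\{(u,u')(v,v'): (u,u'),(v,v')\in\mathcal V,\ uv\in E(G),\ u'v'\in E(H),\ k_E(uv,u'v')>0\}$, with weights $w((u,u'))=k_V(u,u')$ and $w((u,u')(v,v'))=k_E(uv,u'v')$. *)

From HB Require Import structures.
From mathcomp Require Import all_boot all_order all_algebra.
Set Implicit Arguments. Unset Strict Implicit. Unset Printing Implicit Defensive.
Import Order.TTheory GRing.Theory Num.Theory.
Local Open Scope ring_scope.

(* A finite simple graph on a finType T is given by a symmetric irreflexive
   relation e : rel T.  Its edge set is the set of 2-sets {u,v} with e u v. *)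
Definition edge_set (T : finType) (e : rel T) : {set {set T}} :=
  [set A : {set T} | [exists u, exists v, e u v && (A == [set u; v])]].

Section Product.
Variables (R : numDomainType) (V1 V2 : finType) (e1 : rel V1) (e2 : rel V2).
(* vertex kernel k_V and edge kernel k_E; k_E u v s t stands for k_E(uv, st). *)
Variables (kV : V1 -> V2 -> R) (kE : V1 -> V1 -> V2 -> V2 -> R).

Definition wdp_vertex (p : V1 * V2) : bool := 0 < kV p.1 p.2.
Definition wdp_edge (x y : V1 * V2) : bool :=
  [&& wdp_vertex x, wdp_vertex y, e1 x.1 y.1, e2 x.2 y.2 & 0 < kE x.1 y.1 x.2 y.2].
Definition wdp_vweight (p : V1 * V2) : R := kV p.1 p.2.
Definition wdp_eweight (x y : V1 * V2) : R := kE x.1 y.1 x.2 y.2.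

(* ---- The algorithm, instrumented with a cost counter (nat). ----
   Cost model: one evaluation of k_V costs TV, one evaluation of k_E costs TE,
   every other elementary step (loop iteration, comparison, O(1) lookup in the
   n x n' table of created vertices, creation of a vertex/edge) costs 1. *)
Variables (TV TE : nat) (prec : rel (V1 * V2)).

Definition all_pairs : seq (V1 * V2) := [seq (v, v') | v <- enum V1, v' <- enum V2].

(* Phase 1: create the weighted vertices. Cost per pair: TV for k_V, plus 2
   (table initialisation/test and creation). *)
Definition phase1 : seq ((V1 * V2) * R) * nat :=
  foldr (fun p acc =>
           let w := kV p.1 p.2 in
           let c := (acc.2 + TV + 2)%N in
           if 0 < w then ((p, w) :: acc.1, c) else (acc.1, c))
        ([::], 0%N) all_pairs.

Definition nbr_pairs (x : V1 * V2) : seq (V1 * V2) :=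
  [seq (v, t) | v <- enum (e1 x.1), t <- enum (e2 x.2)].

Definition phase2 (vs : seq ((V1 * V2) * R)) :
    seq ((V1 * V2) * (V1 * V2) * R) * nat :=
  let created y := y \in map fst vs in
  foldr (fun pw acc =>
     let x := pw.1 in
     foldr (fun y acc2 =>
              let c := (acc2.2 + 1)%N in
              if created y && prec x y then
                let w := kE x.1 y.1 x.2 y.2 in
                let c' := (c + TE + 1)%N in
                if 0 < w then ((x, y, w) :: acc2.1, c') else (acc2.1, c')
              else (acc2.1, c))
           (acc.1, (acc.2 + 1)%N) (nbr_pairs x))
    ([::], 0%N) vs.

Definition wdp_algorithm :
    seq ((V1 * V2) * R) * seq ((V1 * V2) * (V1 * V2) * R) * nat :=
  let (vs, c1) := phase1 in
  let (es, c2) := phase2 vs in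
  (vs, es, (c1 + c2)%N).

(* Correctness of an output (vs, es) w.r.t. G x_w H:
   vs lists every vertex of G x_w H exactly once with its weight, and es lists
   every (unordered) edge of G x_w H exactly once (in one orientation) with
   its weight. *)
Definition computes_wdp (vs : seq ((V1 * V2) * R))
    (es : seq ((V1 * V2) * (V1 * V2) * R)) : Prop :=
  [/\ uniq (map fst vs),
      forall p w, ((p, w) \in vs) = wdp_vertex p && (w == wdp_vweight p),
      uniq [seq [set x.1.1; x.1.2] | x <- es],
      forall x y w, (x, y, w) \in es -> w = wdp_eweight x y &
      forall x y, wdp_edge x y <->
        exists w, ((x, y, w) \in es) \/ ((y, x, w) \in es)].
End Product.

From HB Require Import structures.
From mathcomp Require Import all_boot all_order all_algebra.
From mathcomp Require Import zify.
Import Order.TTheory GRing.Theory Num.Theory.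
Set Implicit Arguments. Unset Strict Implicit.

(* Phase 2 emits, for each created vertex x, the pairs (x, y)
   with y a created neighbouring pair, x < y and positive edge weight; as < is
   a strict total order, every edge of the product is emitted exactly once.
   Its cost is at most n n' + deg_G * deg_H * (T_E + 2) with deg the sum of
   degrees, and the handshake lemma bounds deg_G * deg_H by 4 m m'. *)

Section OrderedEdges.
Variables (T : finType) (lt : rel T).
Hypothesis lt_asym : forall a b, lt a b -> lt b a -> False.

Lemma set2_inj_lt :
  {in [pred p : T * T | lt p.1 p.2] &, injective (fun p => [set p.1; p.2])}.
Proof.
move=> [a b] [c d]; rewrite !inE /= => ab cd E.
have /set2P a_cd : a \in [set c; d] by rewrite -E set21.
have /set2P b_cd : b \in [set c; d] by rewrite -E set22.
move: ab; case: a_cd b_cd => -> [] -> // ab.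
- by case: (lt_asym ab ab).
- by case: (lt_asym ab cd).
- by case: (lt_asym ab ab).
Qed.

Lemma card_ordered_arcs_le (e : rel T) :
  (#|[set p : T * T | e p.1 p.2 && lt p.1 p.2]| <= #|edge_set e|)%N.
Proof.
rewrite -(card_in_imset (f := fun p : T * T => [set p.1; p.2])); last first.
  by move=> p q; rewrite !inE => /andP[_ ?] /andP[_ ?]; apply: set2_inj_lt.
apply/subset_leq_card/subsetP => A /imsetP[p]; rewrite inE => /andP[ep _] ->.
by rewrite inE; apply/existsP; exists p.1; apply/existsP; exists p.2; rewrite ep eqxx.
Qed.

End OrderedEdges.

Lemma sum_card_neighbours (T : finType) (e : rel T) :
  (\sum_u #|e u| = #|[set p : T * T | e p.1 p.2]|)%N.
Proof.
transitivity (\sum_u \sum_v (if e u v then 1 else 0))%N.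
  by apply: eq_bigr => u _; rewrite -sum1_card big_mkcond.
by rewrite pair_big /= -sum1dep_card [RHS]big_mkcond.
Qed.

Lemma handshake_le (T : finType) (e : rel T) :
  irreflexive e -> (\sum_u #|e u| <= 2 * #|edge_set e|)%N.
Proof.
move=> e_irr; rewrite sum_card_neighbours.
pose lt (a b : T) := (enum_rank a < enum_rank b)%N.
have lt_asym a b : lt a b -> lt b a -> False.
  by move=> ab /(ltn_trans ab); rewrite ltnn.
have arcs_sub : [set p : T * T | e p.1 p.2] \subset
    [set p | e p.1 p.2 && lt p.1 p.2] :|: [set p | e p.1 p.2 && lt p.2 p.1].
  apply/subsetP => p; rewrite !inE => ep; rewrite ep /= /lt.
  case: ltngtP => // /val_inj/enum_rank_inj p12.
  by move: ep; rewrite p12 e_irr.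
rewrite mul2n -addnn; apply: leq_trans (subset_leq_card arcs_sub) _.
apply: leq_trans (leq_card_setU _ _) _; apply: leq_add.
- exact: card_ordered_arcs_le.
- by apply: (@card_ordered_arcs_le _ (fun a b => lt b a)) => a b ba ab; apply: lt_asym ab ba.
Qed.

Local Open Scope ring_scope.

Section Algorithm.
Variables (R : numDomainType) (V1 V2 : finType) (e1 : rel V1) (e2 : rel V2).
Variables (kV : V1 -> V2 -> R) (kE : V1 -> V1 -> V2 -> V2 -> R).
Variables (TV TE : nat) (prec : rel (V1 * V2)).

Lemma mem_all_pairs p : p \in all_pairs V1 V2.
Proof. by case: p => u s; apply: allpairs_f; rewrite mem_enum. Qed.

Lemma uniq_all_pairs : uniq (all_pairs V1 V2).
Proof. by apply: allpairs_uniq; rewrite ?enum_uniq // => -[? ?] [? ?]. Qed.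

Lemma size_all_pairs : size (all_pairs V1 V2) = (#|V1| * #|V2|)%N.
Proof. by rewrite size_allpairs -!cardE. Qed.

Lemma sum_all_pairs (F : V1 * V2 -> nat) :
  (\sum_(p <- all_pairs V1 V2) F p = \sum_u \sum_s F (u, s))%N.
Proof.
by rewrite big_allpairs big_enum; apply: eq_bigr => u _; rewrite big_enum.
Qed.

Lemma mem_nbr_pairs x y : (y \in nbr_pairs e1 e2 x) = e1 x.1 y.1 && e2 x.2 y.2.
Proof.
case: y => v t; apply/allpairsP/andP => [[[v' t'] /= [ev et [-> ->]]]|[ev et]].
  by rewrite !mem_enum in ev et.
by exists (v, t); rewrite !mem_enum.
Qed.

Lemma uniq_nbr_pairs x : uniq (nbr_pairs e1 e2 x).
Proof. by apply: allpairs_uniq; rewrite ?enum_uniq // => -[? ?] [? ?]. Qed.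

Lemma size_nbr_pairs x : size (nbr_pairs e1 e2 x) = (#|e1 x.1| * #|e2 x.2|)%N.
Proof. by rewrite size_allpairs -!cardE. Qed.

Definition wdp_vertices : seq ((V1 * V2) * R) :=
  [seq (p, kV p.1 p.2) | p <- all_pairs V1 V2 & 0 < kV p.1 p.2].

Lemma phase1E : phase1 kV TV = (wdp_vertices, (#|V1| * #|V2| * (TV + 2))%N).
Proof.
rewrite -size_all_pairs /phase1 /wdp_vertices.
elim: (all_pairs V1 V2) => //= p s ->.
by case: ifP => _ /=; rewrite mulSn [(TV + 2 + _)%N]addnC addnA.
Qed.

Lemma wdp_vertices_fst :
  map fst wdp_vertices = [seq p <- all_pairs V1 V2 | wdp_vertex kV p].
Proof. by rewrite -map_comp; apply: map_id. Qed.

Lemma uniq_wdp_vertices : uniq (map fst wdp_vertices).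
Proof. by rewrite wdp_vertices_fst filter_uniq // uniq_all_pairs. Qed.

Lemma mem_wdp_vertices_fst p : (p \in map fst wdp_vertices) = wdp_vertex kV p.
Proof. by rewrite wdp_vertices_fst mem_filter mem_all_pairs andbT. Qed.

Lemma mem_wdp_vertices p w :
  ((p, w) \in wdp_vertices) = wdp_vertex kV p && (w == wdp_vweight kV p).
Proof.
apply/mapP/andP => [[q]|[vp /eqP ->]].
  by rewrite mem_filter => /andP[vq _] [-> ->].
by exists p; rewrite // mem_filter mem_all_pairs andbT.
Qed.

Section Phase2.
Variable created : pred (V1 * V2).

(* The two loop bodies of [phase2], with its membership test in the list of
   created vertices abstracted as [created]; see [phase2E]. *)
Definition scan_neighbour (x y : V1 * V2)
    (acc : seq ((V1 * V2) * (V1 * V2) * R) * nat) :=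
  let c := (acc.2 + 1)%N in
  if created y && prec x y then
    let w := kE x.1 y.1 x.2 y.2 in
    let c' := (c + TE + 1)%N in
    if 0 < w then ((x, y, w) :: acc.1, c') else (acc.1, c')
  else (acc.1, c).

Definition scan_vertex (xw : (V1 * V2) * R)
    (acc : seq ((V1 * V2) * (V1 * V2) * R) * nat) :=
  foldr (scan_neighbour xw.1) (acc.1, (acc.2 + 1)%N) (nbr_pairs e1 e2 xw.1).

Definition out_edges (x : V1 * V2) : seq ((V1 * V2) * (V1 * V2) * R) :=
  [seq (x, y, kE x.1 y.1 x.2 y.2) | y <- nbr_pairs e1 e2 x &
     (created y && prec x y) && (0 < kE x.1 y.1 x.2 y.2)].

Lemma scan_neighbours_fst x ys a c :
  (foldr (scan_neighbour x) (a, c) ys).1 =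
  [seq (x, y, kE x.1 y.1 x.2 y.2) | y <- ys &
     (created y && prec x y) && (0 < kE x.1 y.1 x.2 y.2)] ++ a.
Proof.
elim: ys => //= y ys IH; rewrite {1}/scan_neighbour.
by case: (created y && prec x y) => //=; case: (0 < _) => /=; rewrite IH.
Qed.

Lemma scan_neighbours_cost x ys a c :
  ((foldr (scan_neighbour x) (a, c) ys).2 <= c + size ys * (TE + 2))%N.
Proof.
elim: ys => [|y ys IH] /=; first by rewrite addn0.
rewrite {1}/scan_neighbour.
by case: (created y && prec x y); [case: (0 < _)|] => /=; lia.
Qed.

Lemma scan_vertices_fst xws :
  (foldr scan_vertex ([::], 0%N) xws).1 = flatten [seq out_edges xw.1 | xw <- xws].
Proof. by elim: xws => //= xw xws IH; rewrite {1}/scan_vertex scan_neighbours_fst IH. Qed.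

Lemma scan_vertices_cost xws :
  ((foldr scan_vertex ([::], 0%N) xws).2 <=
   \sum_(xw <- xws) (1 + #|e1 xw.1.1| * #|e2 xw.1.2| * (TE + 2)))%N.
Proof.
elim: xws => [|xw xws IH]; first by rewrite big_nil.
rewrite big_cons /= {1}/scan_vertex -size_nbr_pairs.
by apply: leq_trans (scan_neighbours_cost _ _ _ _) _; lia.
Qed.

Lemma mem_out_edges (xws : seq ((V1 * V2) * R)) x y w :
  ((x, y, w) \in flatten [seq out_edges xw.1 | xw <- xws]) =
  (x \in map fst xws) && [&& e1 x.1 y.1, e2 x.2 y.2, created y, prec x y,
                             0 < kE x.1 y.1 x.2 y.2 & w == kE x.1 y.1 x.2 y.2].
Proof.
apply/flattenP/andP => [[_ /mapP[xw xw_in ->] /mapP[y']]|].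
  rewrite mem_filter mem_nbr_pairs.
  move=> /andP[/andP[/andP[cy pxy] kpos] /andP[n1 n2]] [-> -> ->].
  by split; [apply: map_f | rewrite n1 n2 cy pxy kpos eqxx].
case=> /mapP[xw xw_in ->] /and5P[n1 n2 cy pxy /andP[kpos /eqP ->]].
exists (out_edges xw.1); first exact: map_f.
by apply: map_f; rewrite mem_filter mem_nbr_pairs n1 n2 cy pxy kpos.
Qed.

Lemma uniq_out_edges (xws : seq ((V1 * V2) * R)) :
  uniq (map fst xws) -> uniq (flatten [seq out_edges xw.1 | xw <- xws]).
Proof.
elim: xws => //= xw xws IH /andP[xw_notin uniq_xws]; rewrite cat_uniq IH // andbT.
apply/andP; split.
  by rewrite map_inj_uniq ?filter_uniq ?uniq_nbr_pairs // => y1 y2 [].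
apply/hasP => -[[[x y] w] + /mapP[y' _ [x_xw _ _]]].
by rewrite mem_out_edges x_xw (negbTE xw_notin).
Qed.

End Phase2.

Lemma phase2E xws : phase2 e1 e2 kE TE prec xws =
  foldr (scan_vertex (fun y => y \in map fst xws)) ([::], 0%N) xws.
Proof. by []. Qed.

Lemma wdp_algorithmE : wdp_algorithm e1 e2 kV kE TV TE prec =
  (wdp_vertices, (phase2 e1 e2 kE TE prec wdp_vertices).1,
   (#|V1| * #|V2| * (TV + 2) + (phase2 e1 e2 kE TE prec wdp_vertices).2)%N).
Proof. by rewrite /wdp_algorithm phase1E; case: phase2. Qed.

Lemma mem_phase2_edges x y w :
  ((x, y, w) \in (phase2 e1 e2 kE TE prec wdp_vertices).1) =
  [&& wdp_edge e1 e2 kV kE x y, prec x y & w == wdp_eweight kE x y].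
Proof.
rewrite phase2E scan_vertices_fst mem_out_edges /= !mem_wdp_vertices_fst /wdp_edge.
by case: (wdp_vertex kV y); case: (prec x y); rewrite /= -!andbA ?andbF.
Qed.

Lemma phase2_cost :
  ((phase2 e1 e2 kE TE prec wdp_vertices).2 <=
   #|V1| * #|V2| + (\sum_u #|e1 u|) * (\sum_s #|e2 s|) * (TE + 2))%N.
Proof.
rewrite phase2E; apply: leq_trans (scan_vertices_cost _ _) _.
rewrite big_map big_filter /=.
apply: (@leq_trans (\sum_(p <- all_pairs V1 V2) (1 + #|e1 p.1| * #|e2 p.2| * (TE + 2)))%N).
  by rewrite big_mkcond leq_sum // => p _; case: ifP.
rewrite sum_all_pairs /=.
apply/eq_leq.
under eq_bigr => u _ do rewrite big_split /= sum1_card -big_distrl -big_distrr /=.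
by rewrite big_split /= sum_nat_const -!big_distrl.
Qed.

Section Correctness.
Hypotheses (e1_sym : symmetric e1) (e1_irr : irreflexive e1) (e2_sym : symmetric e2).
Hypothesis kE_symE : forall u v s t, kE u v s t = kE v u s t.
Hypothesis kE_symH : forall u v s t, kE u v s t = kE u v t s.
Hypotheses (prec_irr : irreflexive prec) (prec_trans : transitive prec).
Hypothesis prec_total : forall x y, x != y -> prec x y || prec y x.

Lemma wdp_edgeC x y : wdp_edge e1 e2 kV kE x y = wdp_edge e1 e2 kV kE y x.
Proof. by rewrite /wdp_edge (e1_sym x.1) (e2_sym x.2) kE_symE kE_symH andbCA. Qed.

Lemma wdp_eweightC x y : wdp_eweight kE x y = wdp_eweight kE y x.
Proof. by rewrite /wdp_eweight kE_symE kE_symH. Qed.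

Lemma prec_asym x y : prec x y -> prec y x -> False.
Proof. by move=> xy yx; move: (prec_trans xy yx); rewrite prec_irr. Qed.

Lemma phase2_computes_wdp :
  computes_wdp e1 e2 kV kE wdp_vertices (phase2 e1 e2 kE TE prec wdp_vertices).1.
Proof.
split; [exact: uniq_wdp_vertices | exact: mem_wdp_vertices | | | ].
- rewrite map_inj_in_uniq.
    by rewrite phase2E scan_vertices_fst uniq_out_edges // uniq_wdp_vertices.
  move=> [[x y] w] [[x' y'] w']; rewrite !mem_phase2_edges.
  move=> /and3P[_ xy /eqP->] /and3P[_ xy' /eqP->] /= E.
  by case: (@set2_inj_lt _ _ prec_asym (x, y) (x', y') xy xy' E) => -> ->.
- by move=> x y w; rewrite mem_phase2_edges => /and3P[_ _ /eqP].
- move=> x y; split=> [xy_edge|[w [|]]]; last 2 first.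
  + by rewrite mem_phase2_edges => /and3P[].
  + by rewrite mem_phase2_edges wdp_edgeC => /and3P[].
  have x_neq_y : x != y.
    by apply: contraTneq xy_edge => ->; rewrite /wdp_edge e1_irr /= !andbF.
  case/orP: (prec_total x_neq_y) => [xy | yx].
  + by exists (wdp_eweight kE x y); left; rewrite mem_phase2_edges xy_edge xy eqxx.
  + exists (wdp_eweight kE y x); right.
    by rewrite mem_phase2_edges -wdp_edgeC xy_edge yx eqxx.
Qed.

End Correctness.

End Algorithm.

Theorem proposition8 :
  exists C : nat,
  forall (R : numDomainType) (V1 V2 : finType) (e1 : rel V1) (e2 : rel V2),
    symmetric e1 -> irreflexive e1 -> symmetric e2 -> irreflexive e2 ->
  forall (kV : V1 -> V2 -> R) (kE : V1 -> V1 -> V2 -> V2 -> R),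
    (forall u v s t, kE u v s t = kE v u s t) ->
    (forall u v s t, kE u v s t = kE u v t s) ->
  forall (TV TE : nat), (1 <= TV)%N -> (1 <= TE)%N ->
  forall prec : rel (V1 * V2),
    irreflexive prec -> transitive prec ->
    (forall x y, x != y -> prec x y || prec y x) ->
  let '(vs, es, cost) := wdp_algorithm e1 e2 kV kE TV TE prec in
  computes_wdp e1 e2 kV kE vs es /\
  (cost <= C * (#|V1| * #|V2| * TV
               + #|edge_set e1| * #|edge_set e2| * TE))%N.
Proof.
exists 12 => R V1 V2 e1 e2 e1_sym e1_irr e2_sym e2_irr kV kE kE_symE kE_symH.
move=> TV TE TV_gt0 TE_gt0 prec prec_irr prec_trans prec_total.
rewrite wdp_algorithmE; split; first by apply: phase2_computes_wdp.
have deg_prod : ((\sum_u #|e1 u|) * (\sum_s #|e2 s|) * (TE + 2) <=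
                 4 * (#|edge_set e1| * #|edge_set e2|) * (TE + 2))%N.
  rewrite leq_mul2r; apply/orP; right.
  by rewrite -[4%N]/(2 * 2)%N mulnACA leq_mul ?handshake_le.
have := phase2_cost e1 e2 kV kE TE prec.
nia.
Qed.
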